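(* Let $\zeta\in(0,\infty)$ and for each $n\in\mathbb N$ let $(h_n,w^{(n)})\in\boldsymbol\Sigma([0,\zeta])$, converging to $(h,w)$ in $\mathbf C([0,\zeta],\mathbb R)\times\mathbf C([0,\zeta],\mathbf C_0)$ for the metric $\Delta$. Then $\lim_{n\to\infty}\lVert d_{h_n}-d_h\rVert=\lim_{n\to\infty}\lVert d_{h_n,w^{(n)}}-d_{h,w}\rVert=0$, where $\lVert\cdot\rVert$ is the uniform norm on $[0,\zeta]^2$.
   Context: $\mathbf C_0$: continuous functions $[0,\infty)\to\mathbb R$ with metric $\delta_{\mathtt u}(w,w')=\sum_{n\ge0}2^{-n-1}\min(1,\sup_{[0,n]}|w-w'|)$. $\Delta((h,w),(h',w'))=\sup_{[0,\zeta]}|h-h'|+\sup_{s\in[0,\zeta]}\delta_{\mathtt u}(w_s,w'_s)$. A snake $(h,w)\in\boldsymbol\Sigma([0,\zeta])$: $h\in\mathbf C([0,\zeta],\mathbb R)$, $h\ge0$, $h(0)=h(\zeta)=0$, $s\mapsto w_s\in\mathbf C_0$ continuous, with $w_s(r)=w_s(h(s))=:\widehat w_s$ for $r\ge h(s)$, and $w_{s_1}(r)=w_{s_2}(r)$ for all $r\in[0,m_h(s_1,s_2)]$, where $m_h(s_1,s_2)=\min_{[s_1\wedge s_2,s_1\vee s_2]}h$. Tree pseudo-metric $d_h(s_1,s_2)=h(s_1)+h(s_2)-2m_h(s_1,s_2)$. Snake metric: $M_{h,w}(s_1,s_2)=\min\big(\min_{r\in[m_h(s_1,s_2),h(s_1)]}w_{s_1}(r),\min_{r\in[m_h(s_1,s_2),h(s_2)]}w_{s_2}(r)\big)$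 and $d_{h,w}(s_1,s_2)=\widehat w_{s_1}+\widehat w_{s_2}-2M_{h,w}(s_1,s_2)$. *)

From Stdlib Require Import Reals.
From Coquelicot Require Import Coquelicot.
Open Scope R_scope.

Definition supf (a b : R) (f : R -> R) : R :=
  real (Lub_Rbar (fun y => exists x, a <= x <= b /\ y = f x)).
Definition inff (a b : R) (f : R -> R) : R :=
  real (Glb_Rbar (fun y => exists x, a <= x <= b /\ y = f x)).
Definition supf2 (a b : R) (g : R -> R -> R) : R :=
  real (Lub_Rbar (fun y => exists x1 x2,
     a <= x1 <= b /\ a <= x2 <= b /\ y = g x1 x2)).

(* C_0: elements are functions R -> R, only their restriction to [0,oo) matters *)
Definition is_C0 (w : R -> R) : Prop :=
  forall x, 0 <= x -> forall eps, 0 < eps -> exists del, 0 < del /\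
    forall y, 0 <= y -> Rabs (y - x) < del -> Rabs (w y - w x) < eps.

Definition delta_u (w w' : R -> R) : R :=
  Series (fun n => (/ 2) ^ (n + 1) *
     Rmin 1 (supf 0 (INR n) (fun r => Rabs (w r - w' r)))).

Definition cont_on (a b : R) (f : R -> R) : Prop :=
  forall x, a <= x <= b -> forall eps, 0 < eps -> exists del, 0 < del /\
    forall y, a <= y <= b -> Rabs (y - x) < del -> Rabs (f y - f x) < eps.

Definition cont_path_on (a b : R) (w : R -> R -> R) : Prop :=
  forall x, a <= x <= b -> forall eps, 0 < eps -> exists del, 0 < del /\
    forall y, a <= y <= b -> Rabs (y - x) < del -> delta_u (w y) (w x) < eps.

Definition m_h (h : R -> R) (s1 s2 : R) : R := inff (Rmin s1 s2) (Rmax s1 s2) h.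

Definition d_h (h : R -> R) (s1 s2 : R) : R := h s1 + h s2 - 2 * m_h h s1 s2.

Definition M_hw (h : R -> R) (w : R -> R -> R) (s1 s2 : R) : R :=
  Rmin (inff (m_h h s1 s2) (h s1) (w s1)) (inff (m_h h s1 s2) (h s2) (w s2)).
Definition what (h : R -> R) (w : R -> R -> R) (s : R) : R := w s (h s).
Definition d_hw (h : R -> R) (w : R -> R -> R) (s1 s2 : R) : R :=
  what h w s1 + what h w s2 - 2 * M_hw h w s1 s2.

Definition is_snake (ζ : R) (h : R -> R) (w : R -> R -> R) : Prop :=
  cont_on 0 ζ h /\
  (forall s, 0 <= s <= ζ -> 0 <= h s) /\ h 0 = 0 /\ h ζ = 0 /\
  (forall s, 0 <= s <= ζ -> is_C0 (w s)) /\
  cont_path_on 0 ζ w /\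
  (forall s r, 0 <= s <= ζ -> h s <= r -> w s r = w s (h s)) /\
  (forall s1 s2 r, 0 <= s1 <= ζ -> 0 <= s2 <= ζ ->
     0 <= r <= m_h h s1 s2 -> w s1 r = w s2 r).

Definition DeltaS (ζ : R) (h : R -> R) (w : R -> R -> R)
    (h' : R -> R) (w' : R -> R -> R) : R :=
  supf 0 ζ (fun s => Rabs (h s - h' s)) +
  supf 0 ζ (fun s => delta_u (w s) (w' s)).

(* Since |m_{h'} - m_h| <= sup |h' - h|, the tree distances satisfy
   |d_{h'} - d_h| <= 4 sup |h' - h|.  For the snake distances, all heights eventually lie
   below an integer K, and delta_u-closeness of w'_s to w_s forces uniform closeness on
   [0, K].  Compactness of [0, zeta] makes the paths (w_s) equicontinuous on [0, K], so the
   infima of w'_s and w_s over intervals with nearby endpoints are close; hence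
   |d_{h',w'} - d_{h,w}| <= 8 e once Delta((h',w'),(h,w)) is small. *)

From Stdlib Require Import Reals Lra Lia Classical ClassicalEpsilon.
From Coquelicot Require Import Coquelicot.
Open Scope R_scope.

Lemma Lub_Rbar_real_le (E : R -> Prop) M :
  (exists y, E y) -> (forall y, E y -> y <= M) -> real (Lub_Rbar E) <= M.
Proof.
  intros [y Ey] HM. destruct (Lub_Rbar_correct E) as [Hub Hlub].
  assert (Hle : Rbar_le (Lub_Rbar E) M) by (apply Hlub; exact HM).
  specialize (Hub y Ey). destruct (Lub_Rbar E); easy.
Qed.

Lemma le_Lub_Rbar_real (E : R -> Prop) M y :
  E y -> (forall y, E y -> y <= M) -> y <= real (Lub_Rbar E).
Proof.
  intros Ey HM. destruct (Lub_Rbar_correct E) as [Hub Hlub].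
  assert (Hle : Rbar_le (Lub_Rbar E) M) by (apply Hlub; exact HM).
  specialize (Hub y Ey). destruct (Lub_Rbar E); easy.
Qed.

(* No upper bound is needed: an unbounded set has [real (Lub_Rbar E) = 0]. *)
Lemma Lub_Rbar_real_ge0 (E : R -> Prop) y : E y -> 0 <= y -> 0 <= real (Lub_Rbar E).
Proof.
  intros Ey Hy. destruct (Lub_Rbar_correct E) as [Hub _].
  specialize (Hub y Ey). destruct (Lub_Rbar E); simpl in *; lra.
Qed.

Lemma le_Glb_Rbar_real (E : R -> Prop) M :
  (exists y, E y) -> (forall y, E y -> M <= y) -> M <= real (Glb_Rbar E).
Proof.
  intros [y Ey] HM. destruct (Glb_Rbar_correct E) as [Hlb Hglb].
  assert (Hle : Rbar_le M (Glb_Rbar E)) by (apply Hglb; exact HM).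
  specialize (Hlb y Ey). destruct (Glb_Rbar E); easy.
Qed.

Lemma Glb_Rbar_real_le (E : R -> Prop) M y :
  E y -> (forall y, E y -> M <= y) -> real (Glb_Rbar E) <= y.
Proof.
  intros Ey HM. destruct (Glb_Rbar_correct E) as [Hlb Hglb].
  assert (Hle : Rbar_le M (Glb_Rbar E)) by (apply Hglb; exact HM).
  specialize (Hlb y Ey). destruct (Glb_Rbar E); easy.
Qed.

Lemma le_supf a b f M x : a <= x <= b -> (forall y, a <= y <= b -> f y <= M) ->
  f x <= supf a b f.
Proof.
  intros Hx Hf. apply (le_Lub_Rbar_real _ M); [now exists x |].
  intros y [t [Ht ->]]; auto.
Qed.

Lemma supf_ge0 a b f : a <= b -> (forall x, a <= x <= b -> 0 <= f x) -> 0 <= supf a b f.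
Proof.
  intros Hab Hf. apply (Lub_Rbar_real_ge0 _ (f a)); [exists a; split; [lra | reflexivity] |].
  apply Hf; lra.
Qed.

Lemma le_inff a b f M : a <= b -> (forall x, a <= x <= b -> M <= f x) -> M <= inff a b f.
Proof.
  intros Hab Hf. apply le_Glb_Rbar_real.
  - exists (f a), a; split; [lra | reflexivity].
  - intros y [x [Hx ->]]; auto.
Qed.

Lemma inff_le a b f M x : a <= x <= b -> (forall y, a <= y <= b -> M <= f y) ->
  inff a b f <= f x.
Proof.
  intros Hx Hf. apply (Glb_Rbar_real_le _ M); [now exists x |].
  intros y [t [Ht ->]]; auto.
Qed.

Lemma supf2_le a b g M : a <= b ->
  (forall x1 x2, a <= x1 <= b -> a <= x2 <= b -> g x1 x2 <= M) -> supf2 a b g <= M.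
Proof.
  intros Hab Hg. apply Lub_Rbar_real_le.
  - exists (g a a), a, a; repeat split; lra.
  - intros y [x1 [x2 [H1 [H2 ->]]]]; auto.
Qed.

Lemma supf2_ge0 a b g : a <= b ->
  (forall x1 x2, a <= x1 <= b -> a <= x2 <= b -> 0 <= g x1 x2) -> 0 <= supf2 a b g.
Proof.
  intros Hab Hg. apply (Lub_Rbar_real_ge0 _ (g a a)); [exists a, a; repeat split; lra |].
  apply Hg; lra.
Qed.

Lemma inff_dist_le a b f a' b' g e Mf Mg : a <= b -> a' <= b' ->
  (forall x, a <= x <= b -> Mf <= f x) -> (forall y, a' <= y <= b' -> Mg <= g y) ->
  (forall x, a <= x <= b -> exists y, a' <= y <= b' /\ g y <= f x + e) ->
  (forall y, a' <= y <= b' -> exists x, a <= x <= b /\ f x <= g y + e) ->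
  Rabs (inff a b f - inff a' b' g) <= e.
Proof.
  intros Hab Hab' Hf Hg Hfg Hgf. apply Rabs_le_between.
  assert (inff a' b' g - e <= inff a b f).
  { apply le_inff; [exact Hab |]. intros x Hx. destruct (Hfg x Hx) as [y [Hy Hgy]].
    pose proof (inff_le a' b' g Mg y Hy Hg). lra. }
  assert (inff a b f - e <= inff a' b' g).
  { apply le_inff; [exact Hab' |]. intros y Hy. destruct (Hgf y Hy) as [x [Hx Hfx]].
    pose proof (inff_le a b f Mf x Hx Hf). lra. }
  lra.
Qed.

Definition clamp (a b x : R) : R := Rmax a (Rmin b x).

Lemma clamp_in a b x : a <= b -> a <= clamp a b x <= b.
Proof. unfold clamp, Rmax, Rmin; intros; repeat destruct Rle_dec; lra. Qed.

Lemma clamp_id a b x : a <= x <= b -> clamp a b x = x.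
Proof. unfold clamp, Rmax, Rmin; intros; repeat destruct Rle_dec; lra. Qed.

Lemma clamp_lipschitz a b x y : Rabs (clamp a b y - clamp a b x) <= Rabs (y - x).
Proof.
  unfold clamp, Rmax, Rmin; repeat destruct Rle_dec; unfold Rabs;
    repeat destruct Rcase_abs; lra.
Qed.

Lemma clamp_dist_le a1 b1 a2 b2 c x : a1 <= x <= b1 -> a2 <= b2 ->
  Rabs (a1 - a2) <= c -> Rabs (b1 - b2) <= c -> Rabs (clamp a2 b2 x - x) <= c.
Proof.
  intros Hx Hab Ha Hb. apply Rabs_le_between in Ha, Hb. apply Rabs_le_between.
  unfold clamp, Rmax, Rmin; repeat destruct Rle_dec; lra.
Qed.

Lemma cont_on_clamp a b f : a <= b -> cont_on a b f -> continuity (fun x => f (clamp a b x)).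
Proof.
  intros Hab Hf c eps Heps.
  destruct (Hf (clamp a b c) (clamp_in a b c Hab) eps Heps) as [del [Hdel Hclose]].
  exists del; split; [exact Hdel |]. intros x [_ Hx]. apply Hclose.
  - apply clamp_in, Hab.
  - eapply Rle_lt_trans; [apply clamp_lipschitz | exact Hx].
Qed.

Lemma cont_on_bounded a b f : a <= b -> cont_on a b f ->
  exists M, forall x, a <= x <= b -> Rabs (f x) <= M.
Proof.
  intros Hab Hf.
  pose proof (fun c (_ : a <= c <= b) => cont_on_clamp a b f Hab Hf c) as Hcont.
  destruct (continuity_ab_maj _ a b Hab Hcont) as [xM [HM _]].
  destruct (continuity_ab_min _ a b Hab Hcont) as [xm [Hm _]].
  exists (Rabs (f (clamp a b xM)) + Rabs (f (clamp a b xm))). intros x Hx.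
  specialize (HM x Hx). specialize (Hm x Hx). rewrite (clamp_id a b x) in HM, Hm by exact Hx.
  pose proof (Rabs_pos (f (clamp a b xM))). pose proof (Rabs_pos (f (clamp a b xm))).
  pose proof (Rle_abs (f (clamp a b xM))). pose proof (Rle_abs (- f (clamp a b xm))). rewrite Rabs_Ropp in *.
  apply Rabs_le_between. split; lra.
Qed.

Lemma cont_on_unif_cont a b f : a <= b -> cont_on a b f -> forall eps, 0 < eps ->
  exists del, 0 < del /\ forall x y, a <= x <= b -> a <= y <= b ->
    Rabs (x - y) < del -> Rabs (f x - f y) < eps.
Proof.
  intros Hab Hf eps Heps.
  destruct (Heine (fun x => f (clamp a b x)) (fun c => a <= c <= b) (compact_P3 a b)
     (fun c _ => cont_on_clamp a b f Hab Hf c) (mkposreal eps Heps)) as [del Hdel].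
  exists del; split; [apply cond_pos |]. intros x y Hx Hy Hxy.
  pose proof (Hdel x y Hx Hy Hxy) as H. simpl in H.
  rewrite (clamp_id a b x), (clamp_id a b y) in H by assumption. exact H.
Qed.

Lemma abs_diff_le_supf a b f g x : cont_on a b f -> cont_on a b g -> a <= x <= b ->
  Rabs (f x - g x) <= supf a b (fun s => Rabs (f s - g s)).
Proof.
  intros Hf Hg Hx.
  destruct (cont_on_bounded a b f ltac:(lra) Hf) as [Mf HMf].
  destruct (cont_on_bounded a b g ltac:(lra) Hg) as [Mg HMg].
  apply (le_supf a b (fun s => Rabs (f s - g s)) (Mf + Mg) x Hx). intros y Hy.
  eapply Rle_trans; [apply Rabs_triang | rewrite Rabs_Ropp].
  specialize (HMf y Hy). specialize (HMg y Hy). lra.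
Qed.

Lemma is_C0_cont_on K g : is_C0 g -> cont_on 0 K g.
Proof.
  intros Hg x Hx eps Heps. destruct (Hg x (proj1 Hx) eps Heps) as [del [Hdel Hclose]].
  exists del; split; [exact Hdel |]. intros y Hy. apply Hclose; lra.
Qed.

Definition delta_u_term (f g : R -> R) (n : nat) : R :=
  (/ 2) ^ (n + 1) * Rmin 1 (supf 0 (INR n) (fun r => Rabs (f r - g r))).

Lemma delta_u_term_bounds f g n : 0 <= delta_u_term f g n <= (/ 2) ^ (n + 1).
Proof.
  unfold delta_u_term.
  assert (0 <= supf 0 (INR n) (fun r => Rabs (f r - g r)))
    by (apply supf_ge0; [apply pos_INR | intros; apply Rabs_pos]).
  assert (0 < (/ 2) ^ (n + 1)) by (apply pow_lt; lra).
  assert (0 <= Rmin 1 (supf 0 (INR n) (fun r => Rabs (f r - g r))) <= 1)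
    by (unfold Rmin; destruct Rle_dec; lra).
  split; [apply Rmult_le_pos; lra |].
  rewrite <- (Rmult_1_r ((/ 2) ^ (n + 1))) at 2. apply Rmult_le_compat_l; lra.
Qed.

Lemma is_series_half_pow : is_series (fun n => (/ 2) ^ (n + 1)) 1.
Proof.
  apply (is_series_ext (fun n => (/ 2) ^ S n)); [intros n; now rewrite Nat.add_1_r |].
  apply (is_series_incr_1 (fun n => (/ 2) ^ n)).
  replace (plus 1 _) with (/ (1 - / 2)) by (cbn; unfold plus; cbn; field).
  apply is_series_geom. rewrite Rabs_pos_eq; lra.
Qed.

Lemma ex_series_delta_u_term f g : ex_series (delta_u_term f g).
Proof.
  apply (@ex_series_le R_AbsRing R_CompleteNormedModule _ (fun n => (/ 2) ^ (n + 1))).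
  - intros n. destruct (delta_u_term_bounds f g n).
    change (Rabs (delta_u_term f g n) <= (/ 2) ^ (n + 1)). rewrite Rabs_pos_eq; lra.
  - exists 1. apply is_series_half_pow.
Qed.

Lemma delta_u_le1 f g : delta_u f g <= 1.
Proof.
  rewrite <- (is_series_unique _ _ is_series_half_pow).
  apply Series_le; [apply delta_u_term_bounds |]. exists 1; apply is_series_half_pow.
Qed.

Lemma delta_u_term_le f g K : delta_u_term f g K <= delta_u f g.
Proof.
  pose proof (fun n => proj1 (delta_u_term_bounds f g n)) as Hpos.
  apply Rle_trans with (sum_f_R0 (delta_u_term f g) K).
  - destruct K as [|K]; simpl; [lra |]. pose proof (cond_pos_sum _ K Hpos). lra.
  - apply sum_incr; [| exact Hpos].
    apply is_series_Reals, Series_correct, ex_series_delta_u_term.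
Qed.

Lemma delta_u_ge0 f g : 0 <= delta_u f g.
Proof. eapply Rle_trans; [apply (delta_u_term_bounds f g 0) | apply delta_u_term_le]. Qed.

Lemma delta_u_small_unif f g K e : is_C0 f -> is_C0 g -> 0 < e ->
  delta_u f g < (/ 2) ^ (K + 1) * Rmin 1 e ->
  forall r, 0 <= r <= INR K -> Rabs (f r - g r) < e.
Proof.
  intros Hf Hg He Hd r Hr.
  pose proof (delta_u_term_le f g K) as HK. unfold delta_u_term in HK.
  pose proof (abs_diff_le_supf 0 (INR K) f g r (is_C0_cont_on _ _ Hf) (is_C0_cont_on _ _ Hg) Hr).
  set (S := supf 0 (INR K) (fun r => Rabs (f r - g r))) in *.
  assert (Hp : 0 < (/ 2) ^ (K + 1)) by (apply pow_lt; lra).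
  assert (HS : S < e).
  { destruct (Rlt_or_le S e) as [| Hle]; [assumption | exfalso].
    assert (Hmin : Rmin 1 e <= Rmin 1 S) by (unfold Rmin; repeat destruct Rle_dec; lra).
    pose proof (Rmult_le_compat_l _ _ _ (Rlt_le _ _ Hp) Hmin). lra. }
  lra.
Qed.

(* Compactness of [0, z]: each w_t is uniformly continuous on [0, K], and nearby w_s are
   uniformly close to w_t there. *)
Lemma cont_path_equicont z w K e :
  (forall s, 0 <= s <= z -> is_C0 (w s)) -> cont_path_on 0 z w -> 0 < e ->
  exists eta, 0 < eta /\ forall s r r', 0 <= s <= z ->
    0 <= r <= INR K -> 0 <= r' <= INR K -> Rabs (r - r') < eta ->
    Rabs (w s r - w s r') < e.
Proof.
  intros Hw Hwp He.
  assert (Hloc : forall t, exists d : posreal, 0 <= t <= z ->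
     (forall s r, 0 <= s <= z -> Rabs (s - t) < d -> 0 <= r <= INR K ->
        Rabs (w s r - w t r) < e / 3) /\
     (forall r r', 0 <= r <= INR K -> 0 <= r' <= INR K -> Rabs (r - r') < d ->
        Rabs (w t r - w t r') < e / 3)).
  { intros t. destruct (classic (0 <= t <= z)) as [Ht | Ht];
      [| exists (mkposreal 1 Rlt_0_1); tauto].
    assert (Hc : 0 < (/ 2) ^ (K + 1) * Rmin 1 (e / 3)).
    { apply Rmult_lt_0_compat; [apply pow_lt; lra |]. unfold Rmin; destruct Rle_dec; lra. }
    destruct (Hwp t Ht _ Hc) as [d1 [Hd1 Hnear]].
    destruct (cont_on_unif_cont 0 (INR K) (w t) (pos_INR K) (is_C0_cont_on _ _ (Hw t Ht))
                (e / 3)) as [d2 [Hd2 Hunif]]; [lra |].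
    exists (mkposreal (Rmin d1 d2) (Rmin_pos _ _ Hd1 Hd2)). intros _. simpl. split.
    - intros s r Hs Hst Hr. apply (delta_u_small_unif (w s) (w t) K); auto; [lra |].
      apply Hnear; [exact Hs |]. eapply Rlt_le_trans; [exact Hst | apply Rmin_l].
    - intros r r' Hr Hr' Hrr. apply Hunif; [exact Hr | exact Hr' |].
      eapply Rlt_le_trans; [exact Hrr | apply Rmin_r]. }
  destruct (choice _ Hloc) as [delta Hdelta].
  destruct (compactness_value_1d 0 z delta) as [d Hd].
  exists d; split; [apply cond_pos |]. intros s r r' Hs Hr Hr' Hrr.
  apply NNPP; intros Hfar. apply (Hd s Hs). intros [t [Ht [Hst Hdt]]]. apply Hfar.
  destruct (Hdelta t Ht) as [Hnear Hunif].
  pose proof (Hnear s r Hs Hst Hr) as A1. pose proof (Hnear s r' Hs Hst Hr') as A2.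
  assert (A3 : Rabs (w t r - w t r') < e / 3) by (apply Hunif; auto; lra).
  apply Rabs_lt_between in A1, A2, A3. apply Rabs_lt_between. lra.
Qed.

Lemma Rmin_Rmax_in z s1 s2 x : 0 <= s1 <= z -> 0 <= s2 <= z ->
  Rmin s1 s2 <= x <= Rmax s1 s2 -> 0 <= x <= z.
Proof. unfold Rmin, Rmax; repeat destruct Rle_dec; lra. Qed.

Lemma m_h_ge0 z h s1 s2 : 0 <= s1 <= z -> 0 <= s2 <= z ->
  (forall s, 0 <= s <= z -> 0 <= h s) -> 0 <= m_h h s1 s2.
Proof.
  intros H1 H2 Hh. apply le_inff; [apply Rmin_Rmax |].
  intros x Hx. apply Hh, (Rmin_Rmax_in z s1 s2); assumption.
Qed.

Lemma m_h_le_l z h s1 s2 : 0 <= s1 <= z -> 0 <= s2 <= z ->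
  (forall s, 0 <= s <= z -> 0 <= h s) -> m_h h s1 s2 <= h s1.
Proof.
  intros H1 H2 Hh. apply (inff_le _ _ _ 0); [split; [apply Rmin_l | apply Rmax_l] |].
  intros x Hx. apply Hh, (Rmin_Rmax_in z s1 s2); assumption.
Qed.

Lemma m_h_le_r z h s1 s2 : 0 <= s1 <= z -> 0 <= s2 <= z ->
  (forall s, 0 <= s <= z -> 0 <= h s) -> m_h h s1 s2 <= h s2.
Proof.
  intros H1 H2 Hh. apply (inff_le _ _ _ 0); [split; [apply Rmin_r | apply Rmax_r] |].
  intros x Hx. apply Hh, (Rmin_Rmax_in z s1 s2); assumption.
Qed.

Lemma m_h_dist_le z h1 h2 c s1 s2 : 0 <= s1 <= z -> 0 <= s2 <= z ->
  (forall s, 0 <= s <= z -> 0 <= h1 s) -> (forall s, 0 <= s <= z -> 0 <= h2 s) ->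
  (forall s, 0 <= s <= z -> Rabs (h1 s - h2 s) <= c) ->
  Rabs (m_h h1 s1 s2 - m_h h2 s1 s2) <= c.
Proof.
  intros H1 H2 Hh1 Hh2 Hc.
  pose proof (fun x => Rmin_Rmax_in z s1 s2 x H1 H2) as Hin.
  apply (inff_dist_le _ _ _ _ _ _ _ 0 0); try apply Rmin_Rmax.
  - intros x Hx. apply Hh1, Hin; assumption.
  - intros x Hx. apply Hh2, Hin; assumption.
  - intros x Hx. exists x; split; [exact Hx |].
    specialize (Hc x (Hin x Hx)). apply Rabs_le_between in Hc. lra.
  - intros x Hx. exists x; split; [exact Hx |].
    specialize (Hc x (Hin x Hx)). apply Rabs_le_between in Hc. lra.
Qed.

Lemma d_h_dist_le z h1 h2 c s1 s2 : 0 <= s1 <= z -> 0 <= s2 <= z ->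
  (forall s, 0 <= s <= z -> 0 <= h1 s) -> (forall s, 0 <= s <= z -> 0 <= h2 s) ->
  (forall s, 0 <= s <= z -> Rabs (h1 s - h2 s) <= c) ->
  Rabs (d_h h1 s1 s2 - d_h h2 s1 s2) <= 4 * c.
Proof.
  intros H1 H2 Hh1 Hh2 Hc.
  pose proof (m_h_dist_le z h1 h2 c s1 s2 H1 H2 Hh1 Hh2 Hc) as Hm.
  pose proof (Hc s1 H1) as Hc1. pose proof (Hc s2 H2) as Hc2.
  apply Rabs_le_between in Hm, Hc1, Hc2. apply Rabs_le_between. unfold d_h. lra.
Qed.

(* Each point of one interval is within [c < eta] of the other interval: project it by
   [clamp] and use the modulus of continuity [eta] of [w2]. *)
Lemma inff_dist_unif (w1 w2 : R -> R) K c e eta a1 b1 a2 b2 :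
  is_C0 w1 -> is_C0 w2 -> 0 <= a1 <= b1 -> b1 <= INR K -> 0 <= a2 <= b2 -> b2 <= INR K ->
  Rabs (a1 - a2) <= c -> Rabs (b1 - b2) <= c -> c < eta ->
  (forall r, 0 <= r <= INR K -> Rabs (w1 r - w2 r) < e) ->
  (forall r r', 0 <= r <= INR K -> 0 <= r' <= INR K -> Rabs (r - r') < eta ->
     Rabs (w2 r - w2 r') < e) ->
  Rabs (inff a1 b1 w1 - inff a2 b2 w2) <= 2 * e.
Proof.
  intros Hw1 Hw2 Ha1 Hb1 Ha2 Hb2 Hac Hbc Hceta Hclose Hunif.
  destruct (cont_on_bounded 0 (INR K) w1 (pos_INR K) (is_C0_cont_on _ _ Hw1)) as [M1 HM1].
  destruct (cont_on_bounded 0 (INR K) w2 (pos_INR K) (is_C0_cont_on _ _ Hw2)) as [M2 HM2].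
  apply (inff_dist_le _ _ _ _ _ _ _ (- M1) (- M2)); [lra | lra | | | |].
  - intros x Hx. specialize (HM1 x ltac:(lra)). apply Rabs_le_between in HM1. lra.
  - intros x Hx. specialize (HM2 x ltac:(lra)). apply Rabs_le_between in HM2. lra.
  - intros x Hx. exists (clamp a2 b2 x). split; [apply clamp_in; lra |].
    pose proof (clamp_in a2 b2 x (proj2 Ha2)).
    pose proof (clamp_dist_le a1 b1 a2 b2 c x Hx (proj2 Ha2) Hac Hbc).
    assert (A : Rabs (w2 (clamp a2 b2 x) - w2 x) < e) by (apply Hunif; lra).
    assert (B : Rabs (w1 x - w2 x) < e) by (apply Hclose; lra).
    apply Rabs_lt_between in A, B. lra.
  - intros y Hy. exists (clamp a1 b1 y). split; [apply clamp_in; lra |].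
    pose proof (clamp_in a1 b1 y (proj2 Ha1)).
    rewrite Rabs_minus_sym in Hac, Hbc.
    pose proof (clamp_dist_le a2 b2 a1 b1 c y Hy (proj2 Ha1) Hac Hbc).
    assert (A : Rabs (w2 (clamp a1 b1 y) - w2 y) < e) by (apply Hunif; lra).
    assert (B : Rabs (w1 (clamp a1 b1 y) - w2 (clamp a1 b1 y)) < e) by (apply Hclose; lra).
    apply Rabs_lt_between in A, B. lra.
Qed.

Lemma Rmin_dist_le a b a' b' e :
  Rabs (a - a') <= e -> Rabs (b - b') <= e -> Rabs (Rmin a b - Rmin a' b') <= e.
Proof.
  intros Ha Hb. apply Rabs_le_between in Ha, Hb. apply Rabs_le_between.
  unfold Rmin; repeat destruct Rle_dec; lra.
Qed.

Section SnakeComparison.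

Variables (z : R) (h1 h2 : R -> R) (w1 w2 : R -> R -> R) (K : nat) (c e eta : R).
Hypotheses (h1_ge0 : forall s, 0 <= s <= z -> 0 <= h1 s)
           (h2_ge0 : forall s, 0 <= s <= z -> 0 <= h2 s)
           (h1_le : forall s, 0 <= s <= z -> h1 s <= INR K)
           (h2_le : forall s, 0 <= s <= z -> h2 s <= INR K)
           (h_close : forall s, 0 <= s <= z -> Rabs (h1 s - h2 s) <= c)
           (c_lt_eta : c < eta)
           (w1_C0 : forall s, 0 <= s <= z -> is_C0 (w1 s))
           (w2_C0 : forall s, 0 <= s <= z -> is_C0 (w2 s))
           (w_close : forall s r, 0 <= s <= z -> 0 <= r <= INR K -> Rabs (w1 s r - w2 s r) < e)
           (w2_equicont : forall s r r', 0 <= s <= z -> 0 <= r <= INR K -> 0 <= r' <= INR K ->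
              Rabs (r - r') < eta -> Rabs (w2 s r - w2 s r') < e).

Lemma what_dist_le s : 0 <= s <= z -> Rabs (what h1 w1 s - what h2 w2 s) <= 2 * e.
Proof.
  intros Hs. unfold what.
  pose proof (h1_ge0 s Hs). pose proof (h2_ge0 s Hs).
  pose proof (h1_le s Hs). pose proof (h2_le s Hs).
  assert (A : Rabs (w1 s (h1 s) - w2 s (h1 s)) < e) by (apply w_close; lra).
  assert (B : Rabs (w2 s (h1 s) - w2 s (h2 s)) < e).
  { apply w2_equicont; try lra. eapply Rle_lt_trans; [apply h_close, Hs | exact c_lt_eta]. }
  apply Rabs_lt_between in A, B. apply Rabs_le_between. lra.
Qed.

Lemma M_hw_dist_le s1 s2 : 0 <= s1 <= z -> 0 <= s2 <= z ->
  Rabs (M_hw h1 w1 s1 s2 - M_hw h2 w2 s1 s2) <= 2 * e.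
Proof.
  intros H1 H2.
  pose proof (m_h_dist_le z h1 h2 c s1 s2 H1 H2 h1_ge0 h2_ge0 h_close).
  pose proof (m_h_ge0 z h1 s1 s2 H1 H2 h1_ge0). pose proof (m_h_ge0 z h2 s1 s2 H1 H2 h2_ge0).
  pose proof (m_h_le_l z h1 s1 s2 H1 H2 h1_ge0). pose proof (m_h_le_l z h2 s1 s2 H1 H2 h2_ge0).
  pose proof (m_h_le_r z h1 s1 s2 H1 H2 h1_ge0). pose proof (m_h_le_r z h2 s1 s2 H1 H2 h2_ge0).
  pose proof (h1_le s1 H1). pose proof (h2_le s1 H1).
  pose proof (h1_le s2 H2). pose proof (h2_le s2 H2).
  apply Rmin_dist_le; apply (inff_dist_unif _ _ K c e eta); auto; lra.
Qed.

Lemma d_hw_dist_le s1 s2 : 0 <= s1 <= z -> 0 <= s2 <= z ->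
  Rabs (d_hw h1 w1 s1 s2 - d_hw h2 w2 s1 s2) <= 8 * e.
Proof.
  intros H1 H2.
  pose proof (what_dist_le s1 H1) as W1. pose proof (what_dist_le s2 H2) as W2.
  pose proof (M_hw_dist_le s1 s2 H1 H2) as HM.
  apply Rabs_le_between in W1, W2, HM. apply Rabs_le_between. unfold d_hw. lra.
Qed.

End SnakeComparison.

(* [tol] is the threshold of [delta_u_small_unif] at level [K]; a tolerance at most 1 keeps
   the heights of [h'] below [K] > sup h + 1, and one below [eta] (the equicontinuity
   modulus of [w] on [0, K]) makes the height errors harmless. *)
Lemma d_hw_stable z h w e : 0 <= z -> cont_on 0 z h -> (forall s, 0 <= s <= z -> 0 <= h s) ->
  (forall s, 0 <= s <= z -> is_C0 (w s)) -> cont_path_on 0 z w -> 0 < e ->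
  exists del, 0 < del /\ forall h' w',
    (forall s, 0 <= s <= z -> 0 <= h' s) -> (forall s, 0 <= s <= z -> is_C0 (w' s)) ->
    (forall s, 0 <= s <= z -> Rabs (h' s - h s) <= del) ->
    (forall s, 0 <= s <= z -> delta_u (w' s) (w s) < del) ->
    forall s1 s2, 0 <= s1 <= z -> 0 <= s2 <= z ->
    Rabs (d_hw h' w' s1 s2 - d_hw h w s1 s2) <= 8 * e.
Proof.
  intros Hz Hh Hh0 Hw Hwp He.
  destruct (cont_on_bounded 0 z h Hz Hh) as [M HM].
  destruct (INR_unbounded (M + 1)) as [K HK].
  destruct (cont_path_equicont z w K e Hw Hwp He) as [eta [Heta Hequi]].
  set (tol := (/ 2) ^ (K + 1) * Rmin 1 e).
  assert (Htol : 0 < tol).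
  { apply Rmult_lt_0_compat; [apply pow_lt; lra |]. unfold Rmin; destruct Rle_dec; lra. }
  exists (Rmin (Rmin 1 (eta / 2)) tol). split.
  { apply Rmin_pos; [apply Rmin_pos |]; lra. }
  intros h' w' Hh'0 Hw' Hclose Hdelta.
  assert (Hdel1 : Rmin (Rmin 1 (eta / 2)) tol <= 1)
    by (eapply Rle_trans; apply Rmin_l).
  assert (Hdel_eta : Rmin (Rmin 1 (eta / 2)) tol < eta)
    by (eapply Rle_lt_trans; [eapply Rle_trans; [apply Rmin_l | apply Rmin_r] | lra]).
  assert (Hdel_tol : Rmin (Rmin 1 (eta / 2)) tol <= tol) by apply Rmin_r.
  apply (d_hw_dist_le z h' h w' w K (Rmin (Rmin 1 (eta / 2)) tol) e eta); auto.
  - intros s Hs. specialize (HM s Hs). specialize (Hclose s Hs).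
    apply Rabs_le_between in HM, Hclose. lra.
  - intros s Hs. specialize (HM s Hs). apply Rabs_le_between in HM. lra.
  - intros s r Hs Hr. apply (delta_u_small_unif _ _ K); auto.
    eapply Rlt_le_trans; [apply Hdelta, Hs | exact Hdel_tol].
Qed.

Lemma is_lim_seq_ge0_sum_l (u v : nat -> R) : (forall n, 0 <= u n) -> (forall n, 0 <= v n) ->
  is_lim_seq (fun n => u n + v n) 0 -> is_lim_seq u 0.
Proof.
  intros Hu Hv Huv. apply (is_lim_seq_le_le (fun _ => 0) u (fun n => u n + v n)); auto.
  - intros n. specialize (Hu n). specialize (Hv n). lra.
  - apply is_lim_seq_const.
Qed.

Lemma ge0_of_approx (u a : nat -> R) x : (forall n, 0 <= u n) ->
  (forall n, Rabs (u n - x) <= a n) -> is_lim_seq a 0 -> 0 <= x.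
Proof.
  intros Hu Hua Ha.
  assert (Hlim : is_lim_seq (fun n => x + a n) x).
  { replace (Finite x) with (Rbar_plus x 0) by (simpl; f_equal; ring).
    apply is_lim_seq_plus'; [apply is_lim_seq_const | exact Ha]. }
  apply (is_lim_seq_le (fun _ => 0) (fun n => x + a n) 0 x); [| apply is_lim_seq_const | exact Hlim].
  intros n. specialize (Hu n). specialize (Hua n). apply Rabs_le_between' in Hua. lra.
Qed.

Section UniformLimits.

Variables (z : R) (hn : nat -> R -> R) (h : R -> R) (a : nat -> R).
Hypotheses (z_ge0 : 0 <= z)
           (hn_ge0 : forall n s, 0 <= s <= z -> 0 <= hn n s)
           (h_ge0 : forall s, 0 <= s <= z -> 0 <= h s)
           (hn_close : forall n s, 0 <= s <= z -> Rabs (hn n s - h s) <= a n)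
           (a_lim : is_lim_seq a 0).

Lemma d_h_unif_lim :
  is_lim_seq (fun n => supf2 0 z (fun s1 s2 => Rabs (d_h (hn n) s1 s2 - d_h h s1 s2))) 0.
Proof.
  apply (is_lim_seq_le_le (fun _ => 0) _ (fun n => 4 * a n)).
  - intros n. split; [apply supf2_ge0; [exact z_ge0 | intros; apply Rabs_pos] |].
    apply supf2_le; [exact z_ge0 |]. intros s1 s2 H1 H2. apply (d_h_dist_le z); auto.
  - apply is_lim_seq_const.
  - replace (Finite 0) with (Rbar_mult 4 0) by (simpl; f_equal; ring).
    apply is_lim_seq_scal_l, a_lim.
Qed.

Lemma d_hw_unif_lim (wn : nat -> R -> R -> R) (w : R -> R -> R) (b : nat -> R) :
  cont_on 0 z h -> (forall s, 0 <= s <= z -> is_C0 (w s)) -> cont_path_on 0 z w ->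
  (forall n s, 0 <= s <= z -> is_C0 (wn n s)) ->
  (forall n s, 0 <= s <= z -> delta_u (wn n s) (w s) <= b n) -> is_lim_seq b 0 ->
  is_lim_seq (fun n => supf2 0 z
      (fun s1 s2 => Rabs (d_hw (hn n) (wn n) s1 s2 - d_hw h w s1 s2))) 0.
Proof.
  intros Hh Hw Hwp Hwn Hwb Hb. apply is_lim_seq_spec. intros eps.
  assert (Heps : 0 < eps / 16) by (pose proof (cond_pos eps); lra).
  destruct (d_hw_stable z h w (eps / 16) z_ge0 Hh h_ge0 Hw Hwp Heps) as [del [Hdel Hstable]].
  pose proof a_lim as Ha. apply is_lim_seq_spec in Ha, Hb.
  destruct (Ha (mkposreal del Hdel)) as [N1 HN1], (Hb (mkposreal del Hdel)) as [N2 HN2].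
  exists (Nat.max N1 N2). intros n Hn.
  specialize (HN1 n ltac:(lia)). specialize (HN2 n ltac:(lia)). simpl in HN1, HN2.
  apply Rabs_lt_between in HN1, HN2.
  assert (Hsup : 0 <= supf2 0 z (fun s1 s2 => Rabs (d_hw (hn n) (wn n) s1 s2 - d_hw h w s1 s2))
                 <= 8 * (eps / 16)).
  { split; [apply supf2_ge0; [exact z_ge0 | intros; apply Rabs_pos] |].
    apply supf2_le; [exact z_ge0 |]. apply Hstable; [apply hn_ge0 | apply Hwn | |].
    - intros s Hs. specialize (hn_close n s Hs). lra.
    - intros s Hs. specialize (Hwb n s Hs). lra. }
  apply Rabs_lt_between. lra.
Qed.

End UniformLimits.

Theorem lemma4p20 (ζ : R) (hn : nat -> R -> R) (wn : nat -> R -> R -> R)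
  (h : R -> R) (w : R -> R -> R) :
  0 < ζ ->
  (forall n, is_snake ζ (hn n) (wn n)) ->
  cont_on 0 ζ h ->
  (forall s, 0 <= s <= ζ -> is_C0 (w s)) ->
  cont_path_on 0 ζ w ->
  is_lim_seq (fun n => DeltaS ζ (hn n) (wn n) h w) 0 ->
  is_lim_seq (fun n => supf2 0 ζ (fun s1 s2 => Rabs (d_h (hn n) s1 s2 - d_h h s1 s2))) 0 /\
  is_lim_seq (fun n => supf2 0 ζ
      (fun s1 s2 => Rabs (d_hw (hn n) (wn n) s1 s2 - d_hw h w s1 s2))) 0.
Proof.
  intros Hz Hsnake Hh Hw Hwp HDelta.
  set (a n := supf 0 ζ (fun s => Rabs (hn n s - h s))).
  set (b n := supf 0 ζ (fun s => delta_u (wn n s) (w s))).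
  assert (Ha0 : forall n, 0 <= a n) by (intros n; apply supf_ge0; [lra | intros; apply Rabs_pos]).
  assert (Hb0 : forall n, 0 <= b n) by (intros n; apply supf_ge0; [lra | intros; apply delta_u_ge0]).
  assert (Ha : is_lim_seq a 0) by exact (is_lim_seq_ge0_sum_l a b Ha0 Hb0 HDelta).
  assert (Hb : is_lim_seq b 0).
  { apply (is_lim_seq_ge0_sum_l b a Hb0 Ha0).
    apply (is_lim_seq_ext _ _ _ (fun n => Rplus_comm _ _)), HDelta. }
  assert (Hha : forall n s, 0 <= s <= ζ -> Rabs (hn n s - h s) <= a n)
    by (intros n s Hs; apply abs_diff_le_supf; [apply (Hsnake n) | exact Hh | exact Hs]).
  assert (Hwb : forall n s, 0 <= s <= ζ -> delta_u (wn n s) (w s) <= b n)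
    by (intros n s Hs; apply (le_supf 0 ζ (fun s => delta_u (wn n s) (w s)) 1 s Hs);
        intros; apply delta_u_le1).
  assert (Hhn0 : forall n s, 0 <= s <= ζ -> 0 <= hn n s) by (intros n; apply (Hsnake n)).
  assert (Hh0 : forall s, 0 <= s <= ζ -> 0 <= h s)
    by (intros s Hs; apply (ge0_of_approx (fun n => hn n s) a); auto).
  split.
  - exact (d_h_unif_lim ζ hn h a (Rlt_le _ _ Hz) Hhn0 Hh0 Hha Ha).
  - apply (d_hw_unif_lim ζ hn h a (Rlt_le _ _ Hz) Hhn0 Hh0 Hha Ha wn w b); auto.
    intros n; apply (Hsnake n).
Qed.
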